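(* Define the formal power series $z_1(g,\mathfrak{g})=\sum_{T} g^{e(T)}\,\mathfrak{g}^{m(T)}$, where the sum runs over all rooted plane trees $T$ (including the single-vertex tree) each of whose edges carries a mark from $\{+,0,-\}$, $e(T)$ is the number of edges, and $m(T)$ is the number of non-root vertices that are local maxima of the induced vertex labeling. Then $z_1$ is the unique formal power series in $g$ (with coefficients polynomial in $\mathfrak{g}$) with constant term $1$ satisfying $$3g^2 z_1^4-4g z_1^3+\big(1+2g(1-2\mathfrak{g})\big)z_1^2-1=0.$$ In particular $z_1=\frac{1-\sqrt{1-12g}}{6g}$ for $\mathfrak{g}=1$ and $z_1=\frac{1-\sqrt{1-4g}}{2g}$ for $\mathfrak{g}=0$.
   Context: A rooted plane tree is a finite tree embedded in the plane with a distinguished root vertex (and root corner); edges are oriented away from the root. Given marks in $\{+,0,-\}$ on the edges, the induced vertex labeling assigns label $0$ to the root and increases the label by $+1$, $0$, $-1$ respectively along an edge marked $+$, $0$, $-$ in the direction away from the root. A vertex is a local maximum if its label is greater than or equal to the labels of all its neighbours in the tree. (Via the Cori–Vauquelin–Schaeffer bijection these trees encode rooted pointed quadrangulations with $e(T)$ faces, and the non-root local maxima of the tree correspond to local maxima of the distance labeling.) *)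

From Stdlib Require List.
From HB Require Import structures.
From mathcomp Require Import all_boot all_order all_algebra.
Set Implicit Arguments. Unset Strict Implicit. Unset Printing Implicit Defensive.
Import Order.TTheory GRing.Theory Num.Theory.
Local Open Scope ring_scope.

Inductive mark := MPlus | MZero | MMinus.

Definition mark_delta (m : mark) : int :=
  match m with MPlus => 1 | MZero => 0 | MMinus => -1 end.

(* A rooted plane tree with marked edges: a vertex is given by the ordered
   list of its children, each child carrying the mark of the edge
   from the vertex (towards the root side) to that child. *)
Inductive mtree := MNode : seq (mark * mtree) -> mtree.

Fixpoint edges (t : mtree) : nat :=
  let: MNode cs := t in
  (fix go (cs : seq (mark * mtree)) : nat :=
     match cs with
     | [::] => 0%N
     | (_, c) :: cs' => (1 + edges c + go cs')%N
     end) cs.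

(* Number of vertices of the subtree rooted at t that are local maxima of
   the labeling, where t has label l and its parent has label lp. *)
Fixpoint lmax_sub (t : mtree) (lp l : int) {struct t} : nat :=
  let: MNode cs := t in
  addn (nat_of_bool ((lp <= l) && all (fun c => l + mark_delta c.1 <= l) cs))
   ((fix go (cs : seq (mark * mtree)) : nat :=
        match cs with
        | [::] => 0%N
        | (mk, c) :: cs' => (lmax_sub c l (l + mark_delta mk) + go cs')%N
        end) cs).

Definition locmax (t : mtree) : nat :=
  let: MNode cs := t in
  sumn [seq lmax_sub c.2 0 (mark_delta c.1) | c <- cs].

(* Formal power series in g with coefficients in Z[frak g] (frak g = 'X):
   a series is its coefficient sequence. *)
Definition series := nat -> {poly int}.

Definition sconst (p : {poly int}) : series :=
  fun n => if n is 0%N then p else 0.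
Definition sg : series := fun n => if n == 1%N then 1 else 0.
Definition sadd (a b : series) : series := fun n => a n + b n.
Definition ssub (a b : series) : series := fun n => a n - b n.
Definition smul (a b : series) : series :=
  fun n => \sum_(i < n.+1) a i * b (n - i)%N.
Definition spow (a : series) (k : nat) : series := iter k (smul a) (sconst 1).

Definition z1_equation (z : series) : Prop :=
  forall n,
    ssub (sadd (ssub (smul (sconst 3) (smul (spow sg 2) (spow z 4)))
                     (smul (sconst 4) (smul sg (spow z 3))))
               (smul (sadd (sconst 1)
                           (smul (sconst 2) (smul sg (sconst (1 - 2 *: 'X)))))
                     (spow z 2)))
         (sconst 1) n = 0.

(* c is the coefficient sequence of z1 = sum_T g^e(T) frakg^m(T):
   for every n, the set of marked trees with n edges is enumerated without
   repetition by some list s, and c n = sum_{T in s} frakg^m(T). *)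
Definition is_z1 (c : series) : Prop :=
  forall n : nat, exists s : seq mtree,
    List.NoDup s /\ (forall T, List.In T s <-> edges T = n) /\
    c n = \sum_(T <- s) 'X^(locmax T).

Definition catalan (n : nat) : nat := ('C(n.*2, n) %/ n.+1)%N.

From HB Require Import structures.
From mathcomp Require Import all_boot all_order all_algebra.
From mathcomp Require Import zify ring.
From Stdlib Require Import FunctionalExtensionality.
Import Order.TTheory GRing.Theory Num.Theory.
Local Open Scope ring_scope.
Set Implicit Arguments. Unset Strict Implicit.

(* Removing the first subtree of the root gives a system for three series:
   [B = z_1], the series [A] that also counts the root when it is a local
   maximum, and the series [D] of trees without a [+] edge at the root:
   [B = 1 + g (2A + B) B], [D = 1 + g (A + B) D] and [A = B + (frak g - 1) D].
   Eliminating [A] and [D] gives the quartic.  Two solutions [P], [Q] with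
   constant term 1 satisfy [(P - Q) (g S + P + Q) = 0] for some series [S],
   and [g S + P + Q] has constant term 2, so the solution is unique.  At [frak g = 0] and
   [frak g = 1] the quartic has the factor [z - 1 - k g z^2] with [k = 1], [3];
   differentiating [W = g + k W^2] for [W = g z] yields the recurrence
   [(n + 2) z_(n+1) = k (4n + 2) z_n] of [k^n] times the Catalan numbers. *)

(** * Marked trees and their local maxima *)

Definition mark_eqb (m m' : mark) : bool :=
  match m, m' with
  | MPlus, MPlus | MZero, MZero | MMinus, MMinus => true
  | _, _ => false
  end.

Lemma mark_eqP : Equality.axiom mark_eqb.
Proof. by case; case; constructor. Qed.

HB.instance Definition _ := hasDecEq.Build mark mark_eqP.

Definition forest := seq (mark * mtree).

Fixpoint mtree_forest_rect (P : mtree -> Type) (Q : forest -> Type)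
    (Qnil : Q [::]) (Qcons : forall m t f, P t -> Q f -> Q ((m, t) :: f))
    (PNode : forall f, Q f -> P (MNode f)) (t : mtree) : P t :=
  let: MNode f := t in
  PNode f ((fix go (f : forest) : Q f :=
    if f is (m, t') :: f' then Qcons m t' f' (mtree_forest_rect Qnil Qcons PNode t') (go f')
    else Qnil) f).

Fixpoint mtree_eqb (t u : mtree) : bool :=
  let: (MNode f, MNode g) := (t, u) in
  (fix go (f g : forest) : bool :=
     match f, g with
     | [::], [::] => true
     | (m, t') :: f', (m', u') :: g' => (m == m') && mtree_eqb t' u' && go f' g'
     | _, _ => false
     end) f g.

Lemma mtree_eqP : Equality.axiom mtree_eqb.
Proof.
apply: (@mtree_forest_rect (fun t => forall u, reflect (t = u) (mtree_eqb t u))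
  (fun f => forall g, reflect (f = g) (mtree_eqb (MNode f) (MNode g)))).
- by case=> [|[m u] g]; constructor.
- move=> m t f IHt IHf [|[m' u] g]; first by constructor.
  rewrite [mtree_eqb _ _]/= -[_ f g]/(mtree_eqb (MNode f) (MNode g)).
  case: eqP => [<-|]; last by move=> ne; constructor; case.
  case: IHt => [<-|]; last by move=> ne; constructor; case.
  by case: IHf => [<-|ne]; constructor => //; case.
- by move=> f IHf [g]; case: IHf => [->|ne]; constructor => //; case.
Qed.

HB.instance Definition _ := hasDecEq.Build mtree mtree_eqP.

Definition noplus (f : forest) := all (fun c => c.1 != MPlus) f.

Lemma noplus_cons m t f : noplus ((m, t) :: f) = (m != MPlus) && noplus f.
Proof. by []. Qed.

(* [nlmax b t] counts the local maxima of [t] below a parent whose label is at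
   most the root label of [t] if [b] holds, and larger otherwise. *)
Fixpoint nlmax (b : bool) (t : mtree) : nat :=
  let: MNode f := t in
  ((b && noplus f) +
   (fix go (f : forest) : nat :=
      if f is (m, t') :: f' then (nlmax (m != MMinus) t' + go f')%N else 0%N) f)%N.

Lemma nlmax_cons m t f :
  nlmax false (MNode ((m, t) :: f)) = (nlmax (m != MMinus) t + nlmax false (MNode f))%N.
Proof. by []. Qed.

Lemma nlmax_true f :
  nlmax true (MNode f) = (noplus f + nlmax false (MNode f))%N.
Proof. by []. Qed.

Lemma lmax_subE t lp l : lmax_sub t lp l = nlmax (lp <= l) t.
Proof.
have le_delta (k : int) m : (k + mark_delta m <= k) = (m != MPlus) by case: m => /=; lia.
have ge_delta (k : int) m : (k <= k + mark_delta m) = (m != MMinus) by case: m => /=; lia.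
move: t lp l; apply: (@mtree_forest_rect (fun t => forall lp l, lmax_sub t lp l = nlmax (lp <= l) t)
  (fun f => forall l,
    (fix go (cs : forest) : nat :=
       if cs is (mk, c) :: cs' then (lmax_sub c l (l + mark_delta mk) + go cs')%N else 0%N) f
      = nlmax false (MNode f)
    /\ all (fun c => l + mark_delta c.1 <= l) f = noplus f)).
- by [].
- move=> m t f IHt IHf l; have [go_f all_f] := IHf l.
  by rewrite /= IHt ge_delta le_delta all_f go_f.
- by move=> f IHf lp l; have [go_f all_f] := IHf l; rewrite /= go_f all_f.
Qed.

Lemma locmaxE t : locmax t = nlmax false t.
Proof.
case: t => f; rewrite /locmax; elim: f => [|[m t] f IH] //=.
by rewrite IH lmax_subE add0n; case: m.
Qed.

(** * Enumeration of forests by number of edges *)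

Definition all_marks := [:: MPlus; MZero; MMinus].

Lemma mem_all_marks m : m \in all_marks.
Proof. by case: m. Qed.

Definition fedges (f : forest) := edges (MNode f).

Lemma fedges_cons m t f : fedges ((m, MNode t) :: f) = (fedges t + fedges f).+1.
Proof. by rewrite /fedges /= add1n. Qed.

Lemma fedges_eq0 f : (fedges f == 0%N) = (f == [::]).
Proof. by case: f => [|[m [t]] f] //; rewrite fedges_cons. Qed.

(* The forests with [n] edges, correct as soon as [n <= fuel]. *)
Fixpoint enum_forests (fuel n : nat) : seq forest :=
  if (fuel, n) is (fuel'.+1, n'.+1) then
    flatten [seq flatten [seq flatten [seq [seq (m, MNode t) :: f
      | f <- enum_forests fuel' (n' - k)] | t <- enum_forests fuel' k] | m <- all_marks]
      | k <- iota 0 n'.+1]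
  else if n is 0 then [:: [::]] else [::].

Lemma enum_forestsS fuel n : enum_forests fuel.+1 n.+1 =
  flatten [seq flatten [seq flatten [seq [seq (m, MNode t) :: f
    | f <- enum_forests fuel (n - k)] | t <- enum_forests fuel k] | m <- all_marks]
    | k <- iota 0 n.+1].
Proof. by []. Qed.

Lemma mem_enum_forests fuel n f :
  (n <= fuel)%N -> (f \in enum_forests fuel n) = (fedges f == n).
Proof.
elim: fuel n f => [|fuel IH] [|n] f // le_n_fuel; rewrite ?inE -?fedges_eq0 //.
rewrite enum_forestsS; apply/idP/idP.
- case/flatten_mapP=> k; rewrite mem_iota ltnS => /andP[_ le_kn].
  case/flatten_mapP=> m _ /flatten_mapP[t] + /mapP[f' + ->].
  rewrite !IH ?(leq_trans (leq_subr _ _)) ?(leq_trans le_kn) // => /eqP def_k /eqP def_f'.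
  by rewrite fedges_cons def_f' def_k subnKC.
- case: f => [|[m [t]] f] //; rewrite fedges_cons eqSS => /eqP def_n.
  have le_tn : (fedges t <= n)%N by rewrite -def_n leq_addr.
  apply/flatten_mapP; exists (fedges t); first by rewrite mem_iota ltnS.
  apply/flatten_mapP; exists m; first exact: mem_all_marks.
  apply/flatten_mapP; exists t; first by rewrite IH ?eqxx ?(leq_trans le_tn).
  apply/mapP; exists f => //.
  have le_fn : (fedges f <= n)%N by rewrite -def_n leq_addl.
  by rewrite IH -def_n addKn // (leq_trans le_fn).
Qed.

Lemma uniq_flatten_map (S T : eqType) (s : seq S) (F : S -> seq T) :
  uniq s -> {in s, forall x, uniq (F x)} ->
  {in s &, forall x y z, z \in F x -> z \in F y -> x = y} ->
  uniq (flatten (map F s)).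
Proof.
elim: s => [|x s IH] //= /andP[s'x uniq_s] uniqF disjF.
rewrite cat_uniq uniqF ?mem_head //= IH //; last 2 first.
- by move=> y sy; rewrite uniqF // inE sy orbT.
- by move=> y y' sy sy'; apply: disjF; rewrite inE (sy, sy') orbT.
rewrite andbT; apply/hasP => -[z /flatten_mapP[y sy Fyz] Fxz].
have sy' : y \in x :: s by rewrite inE sy orbT.
by move: s'x; rewrite (disjF x y (mem_head x s) sy' z Fxz Fyz) sy.
Qed.

Lemma uniq_enum_forests fuel n : (n <= fuel)%N -> uniq (enum_forests fuel n).
Proof.
elim: fuel n => [|fuel IH] [|n] // le_n_fuel; rewrite enum_forestsS.
have mem_k k : k \in iota 0 n.+1 -> (k <= fuel)%N.
  by rewrite mem_iota ltnS => /andP[_ /leq_trans->].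
apply: uniq_flatten_map; first exact: iota_uniq.
- move=> k /mem_k le_k_fuel; apply: uniq_flatten_map => //.
  + move=> m _; apply: uniq_flatten_map; first exact: IH.
    * move=> t _; rewrite map_inj_uniq; first exact/IH/(leq_trans (leq_subr _ _)).
      by move=> f f' [].
    * by move=> t t' _ _ z /mapP[f _ ->] /mapP[f' _ [->]].
  + by move=> m m' _ _ z /flatten_mapP[t _ /mapP[f _ ->]] /flatten_mapP[t' _ /mapP[f' _ [->]]].
- move=> k k' /mem_k le_k /mem_k le_k' z.
  case/flatten_mapP=> m _ /flatten_mapP[t kt /mapP[f _ ->]].
  case/flatten_mapP=> m' _ /flatten_mapP[t' k't /mapP[f' _ [_ eq_tt' _]]].
  move: kt k't; rewrite !mem_enum_forests // eq_tt'.
  by move=> /eqP<- /eqP<-.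
Qed.

Definition forests n := enum_forests n n.

Lemma mem_forests n f : (f \in forests n) = (fedges f == n).
Proof. exact: mem_enum_forests. Qed.

Lemma uniq_forests n : uniq (forests n).
Proof. exact: uniq_enum_forests. Qed.

Lemma perm_enum_forests fuel n : (n <= fuel)%N -> perm_eq (enum_forests fuel n) (forests n).
Proof.
move=> le_n_fuel; apply: uniq_perm; rewrite ?uniq_enum_forests ?uniq_forests //.
by move=> f; rewrite mem_forests mem_enum_forests.
Qed.

Lemma big_forestsS (R : pzSemiRingType) (W : forest -> R) (c : mark -> mtree -> R) n :
  (forall m t f, W ((m, MNode t) :: f) = c m (MNode t) * W f) ->
  \sum_(f <- forests n.+1) W f =
  \sum_(k < n.+1) (\sum_(m <- all_marks) \sum_(t <- forests k) c m (MNode t)) *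
                  \sum_(f <- forests (n - k)) W f.
Proof.
move=> Wcons; rewrite [in LHS]/forests enum_forestsS big_flatten big_map.
have -> : iota 0 n.+1 = index_iota 0 n.+1 by rewrite /index_iota subn0.
rewrite big_mkord; apply: eq_bigr => k _.
rewrite big_flatten big_map mulr_suml; apply: eq_bigr => m _.
rewrite big_flatten big_map mulr_suml (perm_big _ (@perm_enum_forests n k (ltn_ord k))).
apply: eq_bigr => t _; rewrite big_map mulr_sumr.
rewrite (perm_big _ (@perm_enum_forests n (n - k) (leq_subr k n))).
by apply: eq_bigr => f _; rewrite Wcons.
Qed.

(** * Generating polynomials *)

(* [lmax_gf false], [lmax_gf true] and [noplus_gf] are the series [B], [A], [D]. *)
Definition lmax_gf (b : bool) (n : nat) : {poly int} :=
  \sum_(f <- forests n) 'X^(nlmax b (MNode f)).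

Definition noplus_gf (n : nat) : {poly int} :=
  \sum_(f <- forests n) (noplus f)%:R * 'X^(nlmax false (MNode f)).

Lemma lmax_gf_true n : lmax_gf true n = lmax_gf false n + ('X - 1) * noplus_gf n.
Proof.
have split_root f : 'X^(nlmax true (MNode f)) =
    'X^(nlmax false (MNode f)) + ('X - 1) * ((noplus f)%:R * 'X^(nlmax false (MNode f)))
    :> {poly int}.
  rewrite nlmax_true exprD; case: (noplus f); last by rewrite expr0 mul1r mulr0n mul0r mulr0 addr0.
  by rewrite expr1 mulr1n mul1r mulrBl mul1r addrC subrK.
by rewrite /lmax_gf /noplus_gf mulr_sumr -big_split; apply: eq_bigr => f _; apply: split_root.
Qed.

Lemma lmax_gf_false0 : lmax_gf false 0 = 1.
Proof. by rewrite /lmax_gf big_seq1 expr0. Qed.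

Lemma noplus_gf0 : noplus_gf 0 = 1.
Proof. by rewrite /noplus_gf big_seq1 mulr1. Qed.

(* The first subtree of a nonempty forest hangs from an edge marked [+] or [0]
   (its root is then not below the parent) or [-]. *)
Lemma lmax_gf_falseS n :
  lmax_gf false n.+1 =
  \sum_(k < n.+1) (lmax_gf true k *+ 2 + lmax_gf false k) * lmax_gf false (n - k).
Proof.
rewrite /lmax_gf (@big_forestsS _ _ (fun m t => 'X^(nlmax (m != MMinus) t))).
  by apply: eq_bigr => k _; rewrite !big_cons big_nil addr0 addrA mulr2n.
by move=> m t f; rewrite nlmax_cons exprD.
Qed.

Lemma noplus_gfS n :
  noplus_gf n.+1 = \sum_(k < n.+1) (lmax_gf true k + lmax_gf false k) * noplus_gf (n - k).
Proof.
rewrite /noplus_gf (@big_forestsS _ _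
  (fun m t => (m != MPlus)%:R * 'X^(nlmax (m != MMinus) t))); last first.
  by move=> m t f; rewrite nlmax_cons noplus_cons -mulnb natrM exprD mulrACA.
apply: eq_bigr => k _; rewrite !big_cons big_nil addr0 big1 ?add0r => [|t _]; last by rewrite mul0r.
by congr ((_ + _) * _); apply: eq_bigr => t _; rewrite mulr1n mul1r.
Qed.

(** * Truncated power series *)

Section TruncatedSeries.
Variable R : comNzRingType.
Implicit Types (a b d s u v : nat -> R) (p q : {poly R}).

Definition trunc N a : {poly R} := \poly_(i < N.+1) a i.

Definition vanish_upto N p := forall n, (n <= N)%N -> p`_n = 0.

Lemma coef_trunc N a n : (n <= N)%N -> (trunc N a)`_n = a n.
Proof. by move=> le_nN; rewrite coef_poly ltnS le_nN. Qed.

Lemma eq_trunc N a b : a =1 b -> trunc N a = trunc N b.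
Proof. by move=> eq_ab; apply/polyP => i; rewrite !coef_poly eq_ab. Qed.

Lemma truncD N a b : trunc N (fun n => a n + b n) = trunc N a + trunc N b.
Proof. by apply/polyP => i; rewrite coefD !coef_poly; case: ifP; rewrite ?addr0. Qed.

Lemma truncMn N a k : trunc N (fun n => a n *+ k) = trunc N a *+ k.
Proof. by apply/polyP => i; rewrite coefMn !coef_poly; case: ifP; rewrite ?mul0rn. Qed.

Lemma truncCM N c a : trunc N (fun n => c * a n) = c%:P * trunc N a.
Proof. by apply/polyP => i; rewrite coefCM !coef_poly; case: ifP; rewrite ?mulr0. Qed.

Lemma vanish_uptoD N p q : vanish_upto N p -> vanish_upto N q -> vanish_upto N (p + q).
Proof. by move=> p0 q0 n le_nN; rewrite coefD p0 // q0 // addr0. Qed.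

Lemma vanish_uptoB N p q : vanish_upto N p -> vanish_upto N q -> vanish_upto N (p - q).
Proof. by move=> p0 q0 n le_nN; rewrite coefB p0 // q0 // subr0. Qed.

Lemma vanish_uptoMr N p q : vanish_upto N p -> vanish_upto N (p * q).
Proof.
move=> p0 n le_nN; rewrite coefM big1 // => i _.
by rewrite p0 ?mul0r // (leq_trans _ le_nN) // -ltnS.
Qed.

Lemma vanish_uptoMl N p q : vanish_upto N q -> vanish_upto N (p * q).
Proof. by rewrite mulrC; apply: vanish_uptoMr. Qed.

Lemma vanish_upto_conv N s u v :
  s 0%N = 1 -> (forall n, s n.+1 = \sum_(k < n.+1) u k * v (n - k)%N) ->
  vanish_upto N (trunc N s - 1 - 'X * (trunc N u * trunc N v)).
Proof.
move=> s0 sS [|n] le_nN; rewrite !coefB coefXM coef1 /=.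
  by rewrite coef_trunc // s0 subrr subr0.
rewrite subr0 coef_trunc // sS coefM; apply/eqP; rewrite subr_eq0; apply/eqP.
apply: eq_bigr => -[i lt_in] _ /=.
by rewrite !coef_trunc // ?(leq_trans (leq_subr _ _)) ?(leq_trans _ le_nN) // ltnW.
Qed.

(* The equation of the theorem with [g = 'X] and [1 - 2 frak g = c]. *)
Definition quartic (c : R) z :=
  3 * ('X ^+ 2 * z ^+ 4) - 4 * ('X * z ^+ 3) + (1 + 2 * ('X * c%:P)) * z ^+ 2 - 1.

Lemma quartic_elim x B D :
  let A := B + (x%:P - 1) * D in
  let eB := B - 1 - 'X * ((A *+ 2 + B) * B) in
  let eD := D - 1 - 'X * ((A + B) * D) in
  quartic (1 - 2 * x) B =
  eB * (2 * (1 - 'X * (A + B)) * B - eB - 2 * 'X * B * (A - B)) +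
  4 * 'X * B ^+ 2 * (x%:P - 1) * eD.
Proof. by rewrite /quartic rmorphB rmorph1 rmorphM rmorph_nat /=; ring. Qed.

Lemma vanish_quartic N a b d x :
  b 0%N = 1 -> d 0%N = 1 -> (forall n, a n = b n + (x - 1) * d n) ->
  (forall n, b n.+1 = \sum_(k < n.+1) (a k *+ 2 + b k) * b (n - k)%N) ->
  (forall n, d n.+1 = \sum_(k < n.+1) (a k + b k) * d (n - k)%N) ->
  vanish_upto N (quartic (1 - 2 * x) (trunc N b)).
Proof.
move=> b0 d0 ab bS dS.
have truncA : trunc N a = trunc N b + (x%:P - 1) * trunc N d.
  by rewrite (eq_trunc N ab) truncD truncCM rmorphB rmorph1.
have eB := vanish_upto_conv (N := N) (u := fun k => a k *+ 2 + b k) b0 bS.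
have eD := vanish_upto_conv (N := N) (u := fun k => a k + b k) d0 dS.
rewrite truncD truncMn truncA in eB; rewrite truncD truncA in eD.
rewrite (quartic_elim x _ (trunc N d)); apply: vanish_uptoD; first exact: vanish_uptoMr.
exact: vanish_uptoMl.
Qed.

Lemma quarticB c P Q :
  quartic c P - quartic c Q =
  (P - Q) * ('X * (3 * 'X * (P ^+ 3 + P ^+ 2 * Q + P * Q ^+ 2 + Q ^+ 3)
                   - 4 * (P ^+ 2 + P * Q + Q ^+ 2) + 2 * c%:P * (P + Q)) + (P + Q)).
Proof. by rewrite /quartic; ring. Qed.

Definition catalan_eqn k z : {poly R} := z - 1 - ('X * z ^+ 2) *+ k.

Lemma quartic1 z : quartic 1 z = catalan_eqn 1 z * (z + 1 - ('X * z ^+ 2) *+ 3).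
Proof. by rewrite /quartic /catalan_eqn rmorph1; ring. Qed.

Lemma quarticN1 z : quartic (-1) z = catalan_eqn 3 z * (z + 1 - ('X * z ^+ 2) *+ 1).
Proof. by rewrite /quartic /catalan_eqn rmorphN rmorph1; ring. Qed.

(* From [W = g + k W^2]: [W' (1 - 2kW) = 1] and [(1 - 2kW)^2 = 1 - 4kg], so
   [W' (1 - 4kg) = 1 - 2kW] up to multiples of the two defining equations. *)
Lemma catalan_deriv_identity (W D : {poly R}) k :
  D * (1 - 'X *+ (4 * k)) - (1 - W *+ (2 * k)) =
  (D - 1 - (W * D) *+ (2 * k)) * (1 - W *+ (2 * k)) + (W - 'X - W ^+ 2 *+ k) * (D *+ (4 * k)).
Proof. by rewrite !mulrnA; ring. Qed.

Lemma catalan_eqn_rec u k n :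
  vanish_upto n.+1 (catalan_eqn k (trunc n.+1 u)) ->
  u n.+1 *+ n.+2 = u n *+ (k * (4 * n + 2)).
Proof.
set T := trunc n.+1 u => vT; set W := 'X * T.
have vE : vanish_upto n.+2 (W - 'X - W ^+ 2 *+ k).
  have -> : W - 'X - W ^+ 2 *+ k = 'X * catalan_eqn k T by rewrite /W /catalan_eqn; ring.
  by case=> [|i] le_i; rewrite coefXM //= vT.
have dE (V : {poly R}) :
    (V - 'X - V ^+ 2 *+ k)^`() = V^`() - 1 - (V * V^`()) *+ (2 * k).
  by rewrite !derivB derivX derivMn expr2 derivM [V^`() * V]mulrC -mulr2n -mulrnA.
have key := catalan_deriv_identity W W^`() k; rewrite -dE in key.
have vR : vanish_upto n.+1 (W^`() * (1 - 'X *+ (4 * k)) - (1 - W *+ (2 * k))).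
  rewrite key; apply: vanish_uptoD; apply: vanish_uptoMr => i le_i.
    by rewrite coef_deriv vE ?mul0rn.
  by rewrite vE // ltnW.
have := vR n.+1 (leqnn _).
rewrite coefB coefB coef1 mulrBr mulr1 coefB mulrnAr coefMn coefMX /= coefMn.
rewrite !coef_deriv /W !coefXM /= !coef_trunc // -mulrnA.
have -> : (n.+1 * (4 * k) = k * (4 * n + 2) + 2 * k)%N by nia.
by rewrite mulrnDr sub0r opprK opprD addrA subrK => /eqP; rewrite subr_eq0 => /eqP.
Qed.

End TruncatedSeries.

Lemma vanish_upto_cancel (R : idomainType) N (F G : {poly R}) :
  vanish_upto N (F * G) -> G`_0 != 0 -> vanish_upto N F.
Proof.
move=> vFG G0 n; elim/ltn_ind: n => n IH le_nN.
have /eqP := vFG n le_nN; rewrite coefM big_ord_recr /= big1 ?add0r => [|i _].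
  by rewrite subnn mulf_eq0 (negbTE G0) orbF => /eqP.
by rewrite IH ?mul0r // (leq_trans (ltnW (ltn_ord i))).
Qed.

Lemma quartic_sol_unique (R : idomainType) (c : R) (d e : nat -> R) :
  2 != 0 :> R -> d 0%N = 1 -> e 0%N = 1 ->
  (forall N, vanish_upto N (quartic c (trunc N d))) ->
  (forall N, vanish_upto N (quartic c (trunc N e))) -> d =1 e.
Proof.
move=> two_neq0 d0 e0 Qd Qe n.
move: (vanish_uptoB (Qd n) (Qe n)); rewrite quarticB => /vanish_upto_cancel.
rewrite coefD coefXM add0r coefD !coef_trunc // d0 e0 => /(_ two_neq0 n (leqnn n)).
by rewrite coefB !coef_trunc // => /eqP; rewrite subr_eq0 => /eqP.
Qed.

(** * Catalan numbers *)

Lemma binom_catalan n : 'C(n.*2, n) = (catalan n * n.+1)%N.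
Proof.
have Cn : (n.+1 * 'C(n.*2, n.+1) = n * 'C(n.*2, n))%N.
  by rewrite mul_bin_left -{1}addnn addnK.
have Cdiff : 'C(n.*2, n) = (('C(n.*2, n) - 'C(n.*2, n.+1)) * n.+1)%N by nia.
by rewrite /catalan {2}Cdiff mulnK.
Qed.

Lemma catalanS n : (n.+2 * catalan n.+1 = (4 * n + 2) * catalan n)%N.
Proof.
have C2n1 := mul_bin_diag n.*2.+1 n; have C2n2 := mul_bin_diag n.*2.+2 n.
have sym : 'C(n.*2.+1, n) = 'C(n.*2.+1, n.+1).
  by rewrite -bin_sub; [congr 'C(_, _) | ]; lia.
have := binom_catalan n.+1; have := binom_catalan n.
rewrite doubleS sym /= in C2n1 C2n2 *; nia.
Qed.

Lemma catalan_eqn_solution (R : numDomainType) (u : nat -> R) k :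
  (forall N, vanish_upto N (catalan_eqn k (trunc N u))) ->
  forall n, u n = (k ^ n * catalan n)%:R.
Proof.
move=> vu; elim=> [|n IH].
  have := vu 0%N 0%N (leqnn 0).
  rewrite !coefB coefMn coefXM coef1 coef_trunc //= mul0rn subr0 => /eqP.
  by rewrite subr_eq0 => /eqP->; rewrite /catalan bin0 divn1.
apply/eqP; rewrite -(eqr_pMn2r (ltn0Sn n.+1)) (catalan_eqn_rec (vu n.+1)) IH -!mulrnA eqr_nat.
rewrite expnS -[(k * _ * _ * _)%N]mulnA [(catalan n.+1 * _)%N]mulnC catalanS.
by apply/eqP; ring.
Qed.

Lemma catalan_of_quartic (R : numDomainType) (c : R) k j (u : nat -> R) :
  (forall z, quartic c z = catalan_eqn k z * (z + 1 - ('X * z ^+ 2) *+ j)) ->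
  u 0%N = 1 -> (forall N, vanish_upto N (quartic c (trunc N u))) ->
  forall n, u n = (k ^ n * catalan n)%:R.
Proof.
move=> factor u0 Qu; apply: catalan_eqn_solution => N.
apply: (@vanish_upto_cancel _ _ _ (trunc N u + 1 - ('X * trunc N u ^+ 2) *+ j)).
  by rewrite -factor.
by rewrite coefB coefD coefMn coefXM coef1 coef_trunc //= u0 mul0rn subr0 -mulr2n pnatr_eq0.
Qed.

(** * The series z_1 *)

Definition agrees_upto N (s : series) (p : {poly {poly int}}) :=
  forall n, (n <= N)%N -> s n = p`_n.

Section Agreement.
Variable N : nat.
Implicit Types (s t : series) (p q : {poly {poly int}}).

Lemma agrees_trunc s : agrees_upto N s (trunc N s).
Proof. by move=> n le_nN; rewrite coef_trunc. Qed.

Lemma agrees_const r : agrees_upto N (sconst r) r%:P.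
Proof. by case=> [|n] _; rewrite coefC. Qed.

Lemma agrees_one : agrees_upto N (sconst 1) 1.
Proof. by have := agrees_const 1; rewrite polyC1. Qed.

Lemma agrees_nat k : agrees_upto N (sconst k%:R) k%:R.
Proof. by have := agrees_const k%:R; rewrite polyC_natr. Qed.

Lemma agrees_g : agrees_upto N sg 'X.
Proof. by move=> n _; rewrite coefX /sg; case: eqP. Qed.

Lemma agrees_add s t p q :
  agrees_upto N s p -> agrees_upto N t q -> agrees_upto N (sadd s t) (p + q).
Proof. by move=> sp tq n le_nN; rewrite coefD /sadd sp ?tq. Qed.

Lemma agrees_sub s t p q :
  agrees_upto N s p -> agrees_upto N t q -> agrees_upto N (ssub s t) (p - q).
Proof. by move=> sp tq n le_nN; rewrite coefB /ssub sp ?tq. Qed.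

Lemma agrees_mul s t p q :
  agrees_upto N s p -> agrees_upto N t q -> agrees_upto N (smul s t) (p * q).
Proof.
move=> sp tq n le_nN; rewrite coefM /smul; apply: eq_bigr => -[i lt_in] _ /=.
by rewrite sp ?tq // (leq_trans _ le_nN) ?leq_subr // ltnW.
Qed.

Lemma agrees_pow s p k : agrees_upto N s p -> agrees_upto N (spow s k) (p ^+ k).
Proof.
move=> sp; elim: k => [|k IH]; first by rewrite expr0; apply: agrees_one.
by rewrite exprS; apply: agrees_mul.
Qed.

End Agreement.

Lemma z1_equationP z :
  z1_equation z <-> forall N, vanish_upto N (quartic (1 - 2 *: 'X) (trunc N z)).
Proof.
rewrite /z1_equation; set lhs := ssub _ _.
have agree N : agrees_upto N lhs (quartic (1 - 2 *: 'X) (trunc N z)).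
  (* [agrees_pow] comes before [agrees_mul], which would unfold the powers. *)
  rewrite /lhs /quartic; do ![exact: agrees_g | exact: agrees_trunc | exact: agrees_one
    | exact: agrees_nat | exact: agrees_const | apply: agrees_pow | apply: agrees_sub
    | apply: agrees_add | apply: agrees_mul].
split=> [z1 N n le_nN | Qz n]; first by rewrite -agree.
by rewrite (agree n n) // Qz.
Qed.

Lemma In_mem (T : eqType) (x : T) (s : seq T) : List.In x s <-> x \in s.
Proof.
elim: s => [|y s IH] /=; first by split.
rewrite inE; split=> [[->|/IH->] | /orP[/eqP->|/IH]]; rewrite ?eqxx ?orbT; auto.
Qed.

Lemma NoDup_uniq (T : eqType) (s : seq T) : List.NoDup s <-> uniq s.
Proof.
elim: s => [|x s IH] /=; first by split=> // _; constructor.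
split=> [/List.NoDup_cons_iff[s'x /IH->] | /andP[s'x /IH nodup_s]].
  by rewrite andbT; apply/negP => /In_mem.
by constructor=> // /In_mem; apply/negP.
Qed.

Lemma is_z1_lmax_gf : is_z1 (lmax_gf false).
Proof.
move=> n; exists [seq MNode f | f <- forests n]; split.
  by apply/NoDup_uniq; rewrite map_inj_uniq ?uniq_forests // => f g [].
split=> [[f]|]; last by rewrite big_map; apply: eq_bigr => f _; rewrite locmaxE.
by rewrite In_mem mem_map ?mem_forests; [split=> /eqP | move=> g g' []].
Qed.

Lemma is_z1_unique c : is_z1 c -> c = lmax_gf false.
Proof.
move=> z1c; apply: functional_extensionality => n.
have [s [/NoDup_uniq uniq_s [mem_s ->]]] := z1c n.
have [t [/NoDup_uniq uniq_t [mem_t ->]]] := is_z1_lmax_gf n.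
apply: perm_big; apply: uniq_perm => // T.
apply/idP/idP => /In_mem Ts; apply/In_mem.
  by apply/(mem_t T).2/(mem_s T).1.
by apply/(mem_s T).2/(mem_t T).1.
Qed.

Lemma quartic_lmax_gf N : vanish_upto N (quartic (1 - 2 *: 'X) (trunc N (lmax_gf false))).
Proof.
rewrite scaler_nat -mulr_natl.
exact: vanish_quartic lmax_gf_false0 noplus_gf0 lmax_gf_true lmax_gf_falseS noplus_gfS.
Qed.

Lemma quartic_horner_lmax_gf (x : int) N :
  vanish_upto N (quartic (1 - 2 * x) (trunc N (fun n => (lmax_gf false n).[x]))).
Proof.
apply: (@vanish_quartic _ N (fun n => (lmax_gf true n).[x]) _ (fun n => (noplus_gf n).[x])).
- by rewrite lmax_gf_false0 hornerC.
- by rewrite noplus_gf0 hornerC.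
- by move=> n; rewrite lmax_gf_true !hornerE.
- by move=> n; rewrite lmax_gf_falseS horner_sum; apply: eq_bigr => k _; rewrite !hornerE.
- by move=> n; rewrite noplus_gfS horner_sum; apply: eq_bigr => k _; rewrite !hornerE.
Qed.

Theorem mainTheorem8 :
  (exists c : series, is_z1 c) /\
  forall c : series, is_z1 c ->
    [/\ c 0%N = 1, z1_equation c,
        (forall d : series, d 0%N = 1 -> z1_equation d -> d = c),
        (forall n, (c n).[1] = (3 ^ n * catalan n)%:R) &
        (forall n, (c n).[0] = (catalan n)%:R)].
Proof.
split; first by exists (lmax_gf false); apply: is_z1_lmax_gf.
move=> c /is_z1_unique ->.
have horner_gf0 x : (lmax_gf false 0).[x] = 1 by rewrite lmax_gf_false0 hornerC.
split=> [||d d0 /z1_equationP Qd||].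
- exact: lmax_gf_false0.
- exact/z1_equationP/quartic_lmax_gf.
- apply: functional_extensionality; apply: quartic_sol_unique Qd quartic_lmax_gf => //.
    by rewrite -polyC_natr polyC_eq0.
  exact: lmax_gf_false0.
- exact: catalan_of_quartic (@quarticN1 int) (horner_gf0 1) (quartic_horner_lmax_gf 1).
- move=> n; rewrite -[catalan n]mul1n -(exp1n n).
  exact: catalan_of_quartic (@quartic1 int) (horner_gf0 0) (quartic_horner_lmax_gf 0) n.
Qed.
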